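(* Let $I$ be a set of players, for each $i\in I$ let $G_i$ be a compact convex subset of a Hausdorff locally convex topological vector space, and let $G=(G_i,P_i,Q_i)_{i\in I}$ be a general qualitative game satisfying property $T$, where $P_i,Q_i:\prod_{j\in I}G_j\to 2^{G_i}$ satisfy for each $i\in I$: (i) $y_i\in Q_i(y_i,x_{-i})$ for each $y_i\in G_i$ and each $x_{-i}\in G_{-i}$; (ii) $Q_i$ has convex closed values; (iii) $P_i$ has convex values; (iv) $x_i\notin P_i(x)$ for each $x\in\prod_{j\in I}G_j$; (v) $P_i^{-1}(y_i)=\{x\in\prod_{j\in I}G_j: y_i\in P_i(x)\}$ is open in $\prod_{j\in I}G_j$ for each $y_i\in G_i$. Then: (a) if $G\to^* H$ and there exist $i\in I$ and $x_i,y_i\in G_i$ with $y_i\succ_H x_i$, then there exists $x_i^*\in H_i$ such that $x_i^*\succ_H x_i$ and $z_i\not\succ_H x_i^*$ for all $z_i\in G_i$; (b) if $M$ is a nonempty maximal $(\to^* )$-reduction of $G$, then $M$ is the unique maximal $(\to^* )$-reduction of $G$.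
   Context: $I$ is a nonempty set; $X=\prod_{j\in I}G_j$, $G_{-i}=\prod_{j\ne i}G_j$, $x=(x_i,x_{-i})$. A general qualitative game is $G=(G_i,P_i,Q_i)_{i\in I}$ with correspondences $P_i,Q_i:X\to 2^{G_i}$. It satisfies property $T$ if for each $i$ and each $x\in X$: $P_i(x)\subseteq Q_i(x)$, and $y_i\in P_i(x)$ implies $Q_i(y_i,x_{-i})\subseteq P_i(x)$. A pairing of $G$ is a family $H=(H_i)_{i\in I}$ with $H_i\subseteq G_i$ (the $P_i$ restricted to $\prod_jH_j$); $H_{-i}=\prod_{j\ne i}H_j$; $H$ is nonempty if every $H_i\neq\emptyset$. For $x_i,y_i\in G_i$: $y_i\succ_H x_i$ iff $H_{-i}\neq\emptyset$ and $y_i\in P_i(x_i,x_{-i})$ for all $x_{-i}\in H_{-i}$. For pairings $R,S$ with $S_i\subseteq R_i$ for all $i$: $R\to S$ means for every $i$ and $x_i\in R_i\setminus S_i$, $\bigcap_{x_{-i}\in R_{-i}}P_i(x_i,x_{-i})\ne\emptyset$; it is fast if moreover for every $i$ and $x_i\in R_i$, $\bigcap_{x_{-i}\in R_{-i}}P_i(x_i,x_{-i})\neq\emptyset$ implies $x_i\notin S_i$. $G\to^*H$ means there is a finite or countably infinite sequence of pairings $R^0=G,R^1,\dots$ with $R^t\to R^{t+1}$ fast for each $t$ and $H_i=\bigcap_tR^t_i$ for each $i$. $H$ is a maximal $(\to^* )$-reduction of $G$ if $G\to^*H$ and, for pairings $H'$ with $H'_i\subseteq H_i$, $H\to H'$ holds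 only for $H'=H$. *)

From HB Require Import structures.
From mathcomp Require Import all_boot all_order all_algebra.
From mathcomp Require Import all_classical all_reals all_analysis.
Unset Printing Implicit Defensive.
Local Open Scope classical_set_scope.

Section GameDefs.
Context {R : realType} {I : Type} {E : I -> tvsType R}.

Definition upd (x : forall j, E j) (i : I) (y : E i) : forall j, E j :=
  fun j => match pselect (i = j) with
           | left e => eq_rect i E y j e
           | right _ => x j
           end.

Definition inX (G : forall i, set (E i)) (x : forall j, E j) : Prop :=
  forall j, G j (x j).

(* the coordinates of x other than i lie in H_{-i} = prod_{j<>i} H_j
   (the i-th coordinate of x is irrelevant) *)
Definition minus_in (H : forall i, set (E i)) (i : I) (x : forall j, E j) : Prop :=
  forall j, j <> i -> H j (x j).

Definition succH (P : forall i, (forall j, E j) -> set (E i))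
  (H : forall i, set (E i)) (i : I) (yi xi : E i) : Prop :=
  (exists x, minus_in H i x) /\
  (forall x, minus_in H i x -> P i (upd x i xi) yi).

(* \bigcap_{x_{-i} in R_{-i}} P_i(x_i, x_{-i}) <> empty
   (the intersection is taken inside G_i, so it is G_i when R_{-i} is empty) *)
Definition inter_nonempty (G : forall i, set (E i))
  (P : forall i, (forall j, E j) -> set (E i))
  (Rr : forall i, set (E i)) (i : I) (xi : E i) : Prop :=
  exists y, G i y /\ (forall x, minus_in Rr i x -> P i (upd x i xi) y).

Definition reduces G P (Rr S : forall i, set (E i)) : Prop :=
  (forall i, S i `<=` Rr i) /\
  (forall i xi, Rr i xi -> ~ S i xi -> inter_nonempty G P Rr i xi).

Definition fast_reduces G P (Rr S : forall i, set (E i)) : Prop :=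
  reduces G P Rr S /\
  (forall i xi, Rr i xi -> inter_nonempty G P Rr i xi -> ~ S i xi).

(* index t belongs to the sequence R^0, ..., R^n (Some n) or R^0, R^1, ... (None) *)
Definition in_range (N : option nat) (t : nat) : Prop :=
  if N is Some n then (t <= n)%N else True.

Definition reduces_star G P (H : forall i, set (E i)) : Prop :=
  exists (Rs : nat -> forall i, set (E i)) (N : option nat),
    (forall i, Rs 0%N i = G i) /\
    (forall t, in_range N t.+1 -> fast_reduces G P (Rs t) (Rs t.+1)) /\
    (forall i, H i = [set y | forall t, in_range N t -> Rs t i y]).

Definition max_reduction G P (H : forall i, set (E i)) : Prop :=
  reduces_star G P H /\
  (forall H' : forall i, set (E i),
     (forall i, H' i `<=` H i) -> reduces G P H H' -> forall i, H' i = H i).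

Definition nonempty_pairing (H : forall i, set (E i)) : Prop :=
  forall i, H i !=set0.

Definition propertyT G (P Q : forall i, (forall j, E j) -> set (E i)) : Prop :=
  forall i x, inX G x ->
    P i x `<=` Q i x /\
    (forall yi, P i x yi -> Q i (upd x i yi) `<=` P i x).

End GameDefs.

From HB Require Import structures.
From mathcomp Require Import all_boot all_order all_algebra.
From mathcomp Require Import all_classical all_reals all_analysis.
Local Open Scope classical_set_scope.

(* Call x_i stable for a pairing S when \bigcap_{x_{-i} in S_{-i}} P_i(x_i, x_{-i})
   is empty.  Stable points survive every step of a reduction sequence.
   (b): deleting a non-stable point from a maximal reduction M would give a
   reduction of M, so every point of M is stable; hence M lies in every
   (->* )-reduction, in particular in every other maximal one.
   (a): relative to H, domination is a strict order on G_i (property T and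
   (iv)), and C(y) = \bigcap_{x_{-i} in H_{-i}} Q_i(y, x_{-i}) is a closed set
   containing everything that dominates y.  Along a chain without maximum these
   sets are nested, so by compactness of G_i they share a point, which dominates
   the whole chain; Zorn's lemma then yields an undominated x_i^*, which is
   stable for H and therefore survives the reduction G ->* H. *)

Section CompactMaximal.
Variables (T : topologicalType) (K : set T) (gt : T -> T -> Prop) (C : T -> set T).
Hypotheses (K_compact : compact K)
  (C_closed : forall {y}, K y -> closed (C y))
  (C_refl : forall {y}, K y -> C y y)
  (C_sub : forall {y}, K y -> C y `<=` K)
  (gt_C : forall {a z}, K a -> gt z a -> C a z)
  (C_gt : forall {a b z}, K a -> gt b a -> C b z -> gt z a)
  (gt_irr : forall {a}, K a -> ~ gt a a).

Lemma gt_K {a z} : K a -> gt z a -> K z.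
Proof. by move=> Ka /(gt_C Ka); apply: C_sub. Qed.

Lemma gt_trans {a b c} : K a -> gt b a -> gt c b -> gt c a.
Proof. move=> Ka ba cb; exact: C_gt Ka ba (gt_C (gt_K Ka ba) cb). Qed.

Lemma C_antitone {a b} : K a -> gt b a -> C b `<=` C a.
Proof. by move=> Ka ba z /(C_gt Ka ba); apply: gt_C. Qed.

Lemma chain_bound (A : set T) : A `<=` K -> A !=set0 ->
  total_on A (fun s t => s = t \/ gt t s) ->
  (forall s, A s -> exists2 s', A s' & gt s' s) ->
  exists2 p, K p & forall s, A s -> gt p s.
Proof.
move=> AK [a Aa] Atot Aup.
pose F := filter_from A C.
have FF : Filter F.
  apply: filter_from_filter; first by exists a.
  move=> s t As At; have [[->|ts]|[->|st]] := Atot s t As At.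
  - by exists t => // z Ctz.
  - by exists t => // z Ctz; split=> //; apply: C_antitone (AK _ As) ts _ _.
  - by exists s => // z Csz.
  - by exists s => // z Csz; split=> //; apply: C_antitone (AK _ At) st _ _.
have PF : ProperFilter F.
  by apply: filter_from_proper => s As; exists s; apply/C_refl/AK.
have [p [Kp clp]] := K_compact F PF (ex_intro2 _ _ a Aa (C_sub (AK _ Aa))).
have C_p s : A s -> C s p.
  by move=> As; apply: (C_closed (AK _ As)) => B; apply: clp; exists s.
exists p => // s As; have [s' As' s's] := Aup s As.
exact: C_gt (AK _ As) s's (C_p _ As').
Qed.

Lemma exists_maximal_gt x y : K x -> gt y x ->
  exists m, [/\ K m, gt m x & forall z, ~ gt z m].
Proof.
move=> Kx yx; pose U := {z | gt z x}.
pose Rl : rel U := fun s t => `[< sval s = sval t \/ gt (sval t) (sval s) >].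
have RlE s t : Rl s t <-> sval s = sval t \/ gt (sval t) (sval s).
  by split => /asboolP.
have [||| t tmax] := @ZL_preorder U (exist _ y yx) Rl.
- by move=> s; apply/RlE; left.
- move=> r s t /RlE rs /RlE st; apply/RlE.
  case: rs => [->|sr]; case: st => [<-|ts]; [by left|by right|by right|].
  by right; apply: gt_trans (gt_K Kx (proj2_sig r)) sr ts.
- move=> A Atot.
  have [[m [Am mmax]]|nomax] := pselect (exists m, A m /\ forall s, A s -> Rl s m).
    by exists m.
  have [[a Aa]|Aempty] := pselect (A !=set0); last first.
    by exists (exist _ y yx) => s As; case: Aempty; exists s.
  have Aup s : A s -> exists2 s', A s' & gt (sval s') (sval s).
    move=> As; apply: contrapT => noup; apply: nomax; exists s; split=> // s' As'.
    have [//|/RlE[e|ss']] := Atot s' s As' As; apply/RlE; first by left.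
    by case: noup; exists s'.
  have [||||p Kp gtp] := @chain_bound (sval @` A).
  - by move=> _ [s _ <-]; apply: gt_K Kx (proj2_sig s).
  - by exists (sval a), a.
  - move=> _ _ [s As <-] [t At <-].
    by have [/RlE[->|]|/RlE[->|]] := Atot s t As At; auto.
  - by move=> _ [s /Aup[s' As' ?] <-]; exists (sval s') => //; exists s'.
  have px : gt p x.
    by apply: gt_trans Kx (proj2_sig a) _; apply: gtp; exists a.
  by exists (exist _ p px) => s As; apply/RlE; right; apply: gtp; exists s.
have Kt := gt_K Kx (proj2_sig t).
exists (sval t); split=> // [|z zt]; first exact: (proj2_sig t).
pose u : U := exist _ z (gt_trans Kx (proj2_sig t) zt).
have /tmax/RlE[e|tz] : Rl t u by apply/RlE; right.
  by apply: (gt_irr Kt); rewrite -[X in gt X _]e.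
exact: gt_irr Kt (gt_trans Kt zt tz).
Qed.

End CompactMaximal.

Lemma in_range0 N : in_range N 0.
Proof. by case: N. Qed.

Lemma in_rangeS {N t} : in_range N t.+1 -> in_range N t.
Proof. by case: N => [n /ltnW|]. Qed.

Section Profiles.
Context {R : realType} {I : Type} {E : I -> tvsType R}.

Lemma upd_same (x : forall j, E j) i (y : E i) : upd x i y i = y.
Proof.
rewrite /upd; case: pselect => [e|//].
by rewrite (Prop_irrelevance e erefl).
Qed.

Lemma upd_upd (x : forall j, E j) i (a b : E i) : upd (upd x i a) i b = upd x i b.
Proof. by apply: functional_extensionality_dep => j; rewrite /upd; case: pselect. Qed.

Lemma inX_upd (G : forall i, set (E i)) (x : forall j, E j) i (y : E i) :
  minus_in G i x -> G i y -> inX G (upd x i y).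
Proof.
move=> Gx Gy j; rewrite /upd; case: pselect => [e|ne]; first by case: j / e.
by apply: Gx => e; apply: ne.
Qed.

End Profiles.

Section Reductions.
Context {R : realType} {I : Type} {E : I -> tvsType R}.
Context {G : forall i, set (E i)} {P : forall i, (forall j, E j) -> set (E i)}.

Lemma inter_nonempty_subr {Rr S : forall i, set (E i)} {i xi} :
  (forall j, S j `<=` Rr j) ->
  inter_nonempty G P Rr i xi -> inter_nonempty G P S i xi.
Proof. by move=> SR [y [Gy Py]]; exists y; split=> // x Sx; apply: Py => j /Sx/SR. Qed.

Lemma reduces_star_sub {H} : reduces_star G P H -> forall i, H i `<=` G i.
Proof.
by move=> [Rs [N [R0 [_ HE]]]] i y; rewrite HE => /(_ 0%N (in_range0 N)); rewrite R0.
Qed.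

Lemma stable_sub_reduces_star {H S Z} : reduces_star G P H ->
  (forall i, Z i `<=` G i) -> (forall i, S i `<=` H i `|` Z i) ->
  (forall i xi, Z i xi -> ~ inter_nonempty G P S i xi) ->
  forall i, Z i `<=` H i.
Proof.
move=> [Rs [N [R0 [Rfast HE]]]] ZG SHZ Zstable.
suff ZR t : in_range N t -> forall i, Z i `<=` Rs t i.
  by move=> i xi Zxi; rewrite HE => t /ZR; apply.
elim: t => [_ i|t IH NSt i xi Zxi]; first by rewrite R0.
have Nt := in_rangeS NSt; have [[_ Rred] _] := Rfast t NSt.
have HR j : H j `<=` Rs t j by move=> y; rewrite HE => /(_ t Nt).
apply: contrapT => nR; apply: (Zstable i xi Zxi).
apply: (inter_nonempty_subr _ (Rred i xi (IH Nt i xi Zxi) nR)).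
by move=> j y /SHZ[/HR|/(IH Nt)].
Qed.

Lemma stable_mem_reduces_star {H i xi} : reduces_star G P H ->
  G i xi -> ~ inter_nonempty G P H i xi -> H i xi.
Proof.
move=> GH Gxi stable.
pose Z j := [set y | G j y /\ ~ inter_nonempty G P H j y].
by apply: (stable_sub_reduces_star (S := H) (Z := Z) GH _ _ _ i xi) => // [j y|j y] [].
Qed.

Lemma max_reduction_stable {M i xi} : max_reduction G P M ->
  M i xi -> ~ inter_nonempty G P M i xi.
Proof.
move=> [_ Mmax] Mxi ine.
pose M' j := [set y | M j y /\ ~ exists e : i = j, y = eq_rect i E xi j e].
have M'M j : M' j `<=` M j by move=> y [].
have red : reduces G P M M'.
  split=> // j y My notM'.
  have [e ->] : exists e : i = j, y = eq_rect i E xi j e.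
    by apply: contrapT => ne; apply: notM'.
  by case: j / e {y My notM'}.
have : M' i xi by rewrite (Mmax M' M'M red).
by case=> _; apply; exists erefl.
Qed.

Lemma max_reduction_sub {M H} : max_reduction G P M -> reduces_star G P H ->
  forall i, M i `<=` H i.
Proof.
move=> Mm GH; apply: (stable_sub_reduces_star (S := M) GH) => [|i y My|i y].
- by apply: reduces_star_sub; case: Mm.
- by right.
- exact: max_reduction_stable.
Qed.

Lemma max_reduction_unique {M M'} : max_reduction G P M -> max_reduction G P M' ->
  forall i, M' i = M i.
Proof.
move=> Mm M'm i; apply/seteqP; split; apply: max_reduction_sub => //.
  by case: Mm.
by case: M'm.
Qed.

End Reductions.

Section Domination.
Context {R : realType} {I : Type} {E : I -> tvsType R}.
Context {G : forall i, set (E i)} {P Q : forall i, (forall j, E j) -> set (E i)}.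
Context {H : forall i, set (E i)} {i : I}.
Hypotheses (G_compact : compact (G i)) (HG : forall j, H j `<=` G j)
  (H_ne : exists x, minus_in H i x) (PT : propertyT G P Q)
  (QG : forall x, inX G x -> Q i x `<=` G i)
  (Q_refl : forall x yi, minus_in G i x -> G i yi -> Q i (upd x i yi) yi)
  (Q_closed : forall x, inX G x -> closed (Q i x))
  (P_irr : forall x, inX G x -> ~ P i x (x i)).

(* [succH P H i y x] is [(exists x, minus_in H i x) /\ dominates y x]. *)
Definition dominates (y x : E i) :=
  forall x', minus_in H i x' -> P i (upd x' i x) y.

Definition Q_upper (y : E i) := \bigcap_(x' in minus_in H i) Q i (upd x' i y).

Let inX_updH {x y} : minus_in H i x -> G i y -> inX G (upd x i y).
Proof. by move=> Hx; apply: inX_upd => j /Hx/HG. Qed.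

Lemma exists_undominated {xi yi} : G i xi -> dominates yi xi ->
  exists xs, [/\ G i xs, dominates xs xi & forall z, ~ dominates z xs].
Proof.
have [x0 Hx0] := H_ne.
apply: (@exists_maximal_gt _ (G i) dominates Q_upper) => //.
- by move=> y Gy; apply: closed_bigI => x' Hx'; apply/Q_closed/inX_updH.
- by move=> y Gy x' Hx'; apply: Q_refl => // j /Hx'/HG.
- by move=> y Gy z Cz; apply: QG _ (inX_updH Hx0 Gy) _ (Cz _ Hx0).
- move=> a z Ga za x' Hx'; have [+ _] := PT i _ (inX_updH Hx' Ga).
  by apply; apply: za.
- move=> a b z Ga ba Cz x' Hx'; have [_ +] := PT i _ (inX_updH Hx' Ga).
  by move=> /(_ b (ba _ Hx')); rewrite upd_upd; apply; apply: Cz.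
- move=> a Ga aa; apply: (P_irr _ (inX_updH Hx0 Ga)).
  by rewrite upd_same; apply: aa.
Qed.

End Domination.

Theorem corollary3 (R : realType) (I : Type) (E : I -> tvsType R)
  (G : forall i, set (E i)) (P Q : forall i, (forall j, E j) -> set (E i)) :
  inhabited I ->
  (forall i, hausdorff_space (E i)) ->
  (forall i, compact (G i)) ->
  (forall i, @convex_set R (E i) (G i)) ->
  (* P_i, Q_i : X -> 2^{G_i} *)
  (forall i x, inX G x -> P i x `<=` G i) ->
  (forall i x, inX G x -> Q i x `<=` G i) ->
  propertyT G P Q ->
  (* (i) *)
  (forall i x yi, minus_in G i x -> G i yi -> Q i (upd x i yi) yi) ->
  (* (ii) *)
  (forall i x, inX G x -> @convex_set R (E i) (Q i x) /\ closed (Q i x)) ->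
  (* (iii) *)
  (forall i x, inX G x -> @convex_set R (E i) (P i x)) ->
  (* (iv) *)
  (forall i x, inX G x -> ~ P i x (x i)) ->
  (* (v) : P_i^{-1}(y_i) is open in X (subspace topology of the product) *)
  (forall i yi, G i yi ->
     exists2 U : set (prod_topology (fun j => (E j : topologicalType))), open U &
       inX G `&` U = [set x | inX G x /\ P i x yi]) ->
  (* (a) *)
  (forall H : forall i, set (E i), reduces_star G P H ->
     forall i xi yi, G i xi -> G i yi -> succH P H i yi xi ->
     exists xs, H i xs /\ succH P H i xs xi /\
       (forall zi, G i zi -> ~ succH P H i zi xs)) /\
  (* (b) *)
  (forall M : forall i, set (E i), nonempty_pairing M -> max_reduction G P M ->
     forall M' : forall i, set (E i), max_reduction G P M' ->
       forall i, M' i = M i).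
Proof.
move=> _ _ G_compact _ _ QG PT Q_refl QCc _ P_irr _.
split=> [H GH i xi yi Gxi _ [H_ne yx]|M _ Mm M' M'm]; last first.
  exact: (max_reduction_unique Mm M'm).
have Q_closed x : inX G x -> closed (Q i x) by case/(QCc i).
have [xs [Gxs xsx xsmax]] := exists_undominated (G_compact i)
  (reduces_star_sub GH) H_ne PT (QG i) (Q_refl i) Q_closed (P_irr i) Gxi yx.
exists xs; split; [|split=> [|z _ [_ /xsmax]]] => //.
by apply: (stable_mem_reduces_star GH Gxs) => -[z [_ /xsmax]].
Qed.
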